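(* Let $(\mathcal{C},P)$ be a heaco. Then $(\mathcal{C},P)$ is implicational if and only if $(\mathcal{C},P)$ is a tripos.
   Context: A doctrine is a pair $(\mathcal{C},P)$, $\mathcal{C}$ a category with finite products, $P:\mathcal{C}^{op}\to\mathbf{Pos}$ a functor, $f^*=P(f)$; primary: each $P(A)$ has binary meets preserved by each $f^*$. Elementary: primary and for every $A$ there is $\delta_A\in P(A\times A)$ such that for every $X$ the assignment $\psi\mapsto\langle\pi_1,\pi_2\rangle^*\psi\wedge\langle\pi_2,\pi_3\rangle^*\delta_A$ is a left adjoint $P(X\times A)\to P(X\times A\times A)$ to $(id_X\times\Delta_A)^*$. Graph of $f:X\to A$: $\mathcal{G}(f)=(f\times id_A)^*\delta_A$. Stable initial object: initial $0$ with $X\times0\cong0$ for all $X$. AC: for every $A$ not stable initial and every $\Gamma$, $\pi_\Gamma^*$ ($\pi_\Gamma:\Gamma\times A\to\Gamma$) has a left adjoint $\Sigma_{\pi_\Gamma}$ and each $\psi\in P(\Gamma\times A)$ has a chosen $\epsilon_\psi:\Gamma\to A$ with $\Sigma_{\pi_\Gamma}\psi=\langle id_\Gamma,\epsilon_\psi\rangle^*\psi$ (also with factors swapped). Co-comprehension: each $P(A)$ has a bottom and each $\alpha$ has $\lceil\alpha\rceil:\{\alpha\}^o\to A$ with $\lceil\alpha\rceil^*\alpha=\bot$, universal among $f$ with $f^*\alpha=\bot$; full if $\lceil\beta\rceil$ factoring through $\lceil\alpha\rceil$ implies $\alpha\le\beta$. An eaco is an elementary doctrine with full co-comprehension satisfying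 AC such that for every $f:X\to A$, $\alpha\in P(A)$: $f^*\langle\epsilon_{\mathcal{G}(\lceil\alpha\rceil)},id_A\rangle^*\mathcal{G}(\lceil\alpha\rceil)=\langle\epsilon_{\mathcal{G}(\lceil f^*\alpha\rceil)},id_X\rangle^*\mathcal{G}(\lceil f^*\alpha\rceil)$. Higher order: for every $A$ there are $\mathbb{P}(A)$ and $\in_A\in P(A\times\mathbb{P}(A))$ such that every $\phi\in P(A\times Y)$ equals $(id_A\times\chi_\phi)^*\in_A$ for some $\chi_\phi:Y\to\mathbb{P}(A)$. A heaco is a higher order eaco. Implicational: each $P(A)$ carries an operation $\rightarrow$ with (ii) $f^*(\alpha\rightarrow\beta)=f^*\alpha\rightarrow f^*\beta$; (iii) for every projection $\pi_A:X\times A\to A$, right adjoints $\Pi_{\pi_A}$ of $\pi_A^*$ exist and $\Pi_{\pi_A}(\pi_A^*\alpha\rightarrow\beta)=\alpha\rightarrow\Pi_{\pi_A}\beta$; (iv) (a) $\phi\le\psi\rightarrow\phi$; (b) $\gamma\rightarrow(\phi\rightarrow\psi)\le(\gamma\rightarrow\phi)\rightarrow(\gamma\rightarrow\psi)$; (c) if $\gamma\le\phi\rightarrow\psi$ and $\gamma\le\phi$ then $\gamma\le\psi$; (d) if $\phi\le\psi$ then $\gamma\le\phi\rightarrow\psi$. A tripos is a doctrine such that (i) each $P(A)$ is a Heyting algebra and each $f^*$ a Heyting homomorphism; (ii) for every product projection $f$, $f^*$ has left and right adjoints $\Sigma_f,\Pi_f$ satisfying Beck–Chevalley ($h^*\Sigma_f\gamma=\Sigma_gk^*\gamma$,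 $h^*\Pi_f\gamma=\Pi_gk^*\gamma$ for pullback squares $h\circ g=f\circ k$); (iii) for each $X$ there is $\delta_X\in P(X\times X)$ with $\top_X\le\Delta_X^*\alpha$ iff $\delta_X\le\alpha$ for all $\alpha\in P(X\times X)$; (iv) it is higher order. *)

From Stdlib Require Import Logic.FunctionalExtensionality.
Set Implicit Arguments.
Unset Strict Implicit.

Record Cat := {
  Ob :> Type;
  Hom : Ob -> Ob -> Type;
  idm : forall A, Hom A A;
  comp : forall A B C, Hom B C -> Hom A B -> Hom A C;
  comp_idl : forall A B (f : Hom A B), comp (idm B) f = f;
  comp_idr : forall A B (f : Hom A B), comp f (idm A) = f;
  comp_assoc : forall A B C D (h : Hom C D) (g : Hom B C) (f : Hom A B),
      comp h (comp g f) = comp (comp h g) f;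
  term : Ob;
  to_term : forall A, Hom A term;
  to_term_uniq : forall A (f : Hom A term), f = to_term A;
  prod : Ob -> Ob -> Ob;
  p1 : forall A B, Hom (prod A B) A;
  p2 : forall A B, Hom (prod A B) B;
  pair : forall X A B, Hom X A -> Hom X B -> Hom X (prod A B);
  p1_pair : forall X A B (f : Hom X A) (g : Hom X B), comp (p1 A B) (pair f g) = f;
  p2_pair : forall X A B (f : Hom X A) (g : Hom X B), comp (p2 A B) (pair f g) = g;
  pair_uniq : forall X A B (h : Hom X (prod A B)),
      h = pair (comp (p1 A B) h) (comp (p2 A B) h)
}.

Arguments idm {c} A.
Arguments comp {c A B C} g f.
Arguments p1 {c A B}.
Arguments p2 {c A B}.
Arguments pair {c X A B} f g.
Arguments prod {c} A B.
Arguments Hom {c} A B.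

Definition iso (C : Cat) (X Y : C) : Prop :=
  exists (f : Hom X Y) (g : Hom Y X), comp g f = idm X /\ comp f g = idm Y.

Definition stable_initial (C : Cat) (Z : C) : Prop :=
  (forall Y : C, exists f : Hom Z Y, forall g : Hom Z Y, g = f) /\
  (forall X : C, iso (prod X Z) Z).

Record Doctrine (C : Cat) := {
  P : C -> Type;
  le : forall A, P A -> P A -> Prop;
  le_refl : forall A (a : P A), le a a;
  le_trans : forall A (a b c : P A), le a b -> le b c -> le a c;
  le_antisym : forall A (a b : P A), le a b -> le b a -> a = b;
  re : forall X A : C, Hom X A -> P A -> P X;
  re_mono : forall X A (f : Hom X A) (a b : P A), le a b -> le (re f a) (re f b);
  re_id : forall A (a : P A), re (idm A) a = a;
  re_comp : forall X Y A (f : Hom X Y) (g : Hom Y A) (a : P A),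
      re (comp g f) a = re f (re g a)
}.

Arguments P {C} d A.
Arguments le {C d A} a b.
Arguments re {C d X A} f a.

Section Notions.
Context {C : Cat} (D : Doctrine C).

Definition is_meet A (a b m : P D A) : Prop :=
  le m a /\ le m b /\ forall c, le c a -> le c b -> le c m.
Definition is_join A (a b j : P D A) : Prop :=
  le a j /\ le b j /\ forall c, le a c -> le b c -> le j c.
Definition is_top A (t : P D A) : Prop := forall c, le c t.
Definition is_bot A (b : P D A) : Prop := forall c, le b c.
(** Heyting implication (relative to the meets of P(A)). *)
Definition is_imp A (a b i : P D A) : Prop :=
  forall c, le c i <-> (forall m, is_meet c a m -> le m b).

Definition primary : Prop :=
  (forall A (a b : P D A), exists m, is_meet a b m) /\
  (forall X A (f : Hom X A) (a b m : P D A),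
      is_meet a b m -> is_meet (re f a) (re f b) (re f m)).

(** Product X x A x A is read as (X x A) x A.
    <pi1,pi2> = p1,  <pi2,pi3> = <p2 o p1, p2>,  id_X x Delta_A = <id, p2>. *)
Definition elementary_with (delta : forall A, P D (prod A A)) : Prop :=
  primary /\
  forall (X A : C) (psi : P D (prod X A)) (phi : P D (prod (prod X A) A)) m,
    is_meet (re p1 psi) (re (pair (comp p2 p1) p2) (delta A)) m ->
    (le m phi <-> le psi (re (pair (idm (prod X A)) p2) phi)).

Definition graph (delta : forall A, P D (prod A A)) X A (f : Hom X A) : P D (prod A A) -> P D (prod X A) :=
  fun d => re (pair (comp f p1) p2) d.
Definition Graph (delta : forall A, P D (prod A A)) X A (f : Hom X A) : P D (prod X A) :=
  graph delta f (delta A).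

Definition higher_order : Prop :=
  forall A : C, exists (PA : C) (inA : P D (prod A PA)),
    forall (Y : C) (phi : P D (prod A Y)), exists chi : Hom Y PA,
      phi = re (pair p1 (comp chi p2)) inA.

Definition implicational : Prop :=
  exists imp : forall A, P D A -> P D A -> P D A,
    (forall X A (f : Hom X A) (a b : P D A), re f (imp A a b) = imp X (re f a) (re f b)) /\
    (* (iii) *)
    (forall X A : C, exists Pi : P D (prod X A) -> P D A,
        (forall (a : P D A) (phi : P D (prod X A)), le (re p2 a) phi <-> le a (Pi phi)) /\
        (forall (a : P D A) (b : P D (prod X A)),
            Pi (imp _ (re p2 a) b) = imp A a (Pi b))) /\
    (forall A (phi psi : P D A), le phi (imp A psi phi)) /\
    (forall A (g phi psi : P D A),
        le (imp A g (imp A phi psi)) (imp A (imp A g phi) (imp A g psi))) /\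
    (forall A (g phi psi : P D A), le g (imp A phi psi) -> le g phi -> le g psi) /\
    (forall A (g phi psi : P D A), le phi psi -> le g (imp A phi psi)).

Definition tripos : Prop :=
  ((forall A : C,
      (exists t : P D A, is_top t) /\ (exists b : P D A, is_bot b) /\
      (forall a b : P D A, exists m, is_meet a b m) /\
      (forall a b : P D A, exists j, is_join a b j) /\
      (forall a b : P D A, exists i, is_imp a b i)) /\
   (forall X A (f : Hom X A),
      (forall t, is_top t -> is_top (re f t)) /\
      (forall b, is_bot b -> is_bot (re f b)) /\
      (forall a b m, is_meet a b m -> is_meet (re f a) (re f b) (re f m)) /\
      (forall a b j, is_join a b j -> is_join (re f a) (re f b) (re f j)) /\
      (forall a b i, is_imp a b i -> is_imp (re f a) (re f b) (re f i)))) /\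
  (exists (Sg1 Pi1 : forall G A : C, P D (prod G A) -> P D G)
          (Sg2 Pi2 : forall A G : C, P D (prod A G) -> P D G),
      (forall G A (g : P D (prod G A)) (b : P D G),
          (le (Sg1 G A g) b <-> le g (re p1 b)) /\
          (le b (Pi1 G A g) <-> le (re p1 b) g)) /\
      (forall A G (g : P D (prod A G)) (b : P D G),
          (le (Sg2 A G g) b <-> le g (re p2 b)) /\
          (le b (Pi2 A G g) <-> le (re p2 b) g)) /\
      (forall (G Dl A : C) (h : Hom Dl G) (g : P D (prod G A)),
          re h (Sg1 G A g) = Sg1 Dl A (re (pair (comp h p1) p2) g) /\
          re h (Pi1 G A g) = Pi1 Dl A (re (pair (comp h p1) p2) g)) /\
      (forall (G Dl A : C) (h : Hom Dl G) (g : P D (prod A G)),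
          re h (Sg2 A G g) = Sg2 A Dl (re (pair p1 (comp h p2)) g) /\
          re h (Pi2 A G g) = Pi2 A Dl (re (pair p1 (comp h p2)) g))) /\
  (forall X : C, exists delta : P D (prod X X),
      forall (a : P D (prod X X)) (t : P D X), is_top t ->
        (le t (re (pair (idm X) (idm X)) a) <-> le delta a)) /\
  higher_order.

End Notions.

(** * Heacos: higher order eacos, with all chosen data *)
Record Heaco (C : Cat) (D : Doctrine C) := {
  h_delta : forall A : C, P D (prod A A);
  h_elem : elementary_with h_delta;
  h_bot : forall A : C, exists b : P D A, is_bot b;
  h_coc_ob : forall A : C, P D A -> C;
  h_coc : forall A (a : P D A), Hom (h_coc_ob a) A;
  h_coc_bot : forall A (a : P D A), is_bot (re (h_coc a) a);
  h_coc_univ : forall A (a : P D A) X (f : Hom X A), is_bot (re f a) ->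
      exists g : Hom X (h_coc_ob a), comp (h_coc a) g = f /\
        forall g' : Hom X (h_coc_ob a), comp (h_coc a) g' = f -> g' = g;
  h_coc_full : forall A (a b : P D A),
      (exists g : Hom (h_coc_ob b) (h_coc_ob a), comp (h_coc a) g = h_coc b) -> le a b;
  (* AC, both factor orders; epsilon chosen *)
  h_eps1 : forall (G A : C) (psi : P D (prod G A)), ~ stable_initial A -> Hom G A;
  h_eps1_spec : forall G A (psi : P D (prod G A)) (H : ~ stable_initial A) (b : P D G),
      le (re (pair (idm G) (h_eps1 psi H)) psi) b <-> le psi (re p1 b);
  h_eps2 : forall (A G : C) (psi : P D (prod A G)), ~ stable_initial A -> Hom G A;
  h_eps2_spec : forall A G (psi : P D (prod A G)) (H : ~ stable_initial A) (b : P D G),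
      le (re (pair (h_eps2 psi H) (idm G)) psi) b <-> le psi (re p2 b);
  h_eaco : forall X A (f : Hom X A) (a : P D A)
      (H1 : ~ stable_initial (h_coc_ob a)) (H2 : ~ stable_initial (h_coc_ob (re f a))),
      re f (re (pair (h_eps2 (Graph h_delta (h_coc a)) H1) (idm A))
               (Graph h_delta (h_coc a)))
      = re (pair (h_eps2 (Graph h_delta (h_coc (re f a))) H2) (idm X))
               (Graph h_delta (h_coc (re f a)));
  h_higher : higher_order D
}.

(* For a tripos, the Heyting implication of each fibre satisfies the implicational
   axioms, and universal quantification along a projection commutes with it because
   reindexing preserves meets.

   Conversely, in a heaco full co-comprehension detects the order: [a <= b] as soon
   as [a] becomes bottom after reindexing along the co-comprehension of [b].  Testing
   inequalities this way, axioms (a), (c), (d) make [->] a Heyting implication and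
   force [neg (neg a) = a]: every fibre is a Boolean algebra.  Joins are then De Morgan duals
   of meets and existential quantifiers duals of universal ones.  Beck-Chevalley for
   [Sigma] comes from the choice maps of AC, which compute [Sigma] by substitution
   (over a stable initial object every fibre is trivial); it transfers to [Pi] by
   duality.  Equality is the elementary structure. *)

From Stdlib Require Import ClassicalEpsilon Classical.
Set Implicit Arguments.
Unset Strict Implicit.

Section Products.
Context {C : Cat}.

Lemma pair_comp (X Y A B : C) (f : Hom Y A) (g : Hom Y B) (h : Hom X Y) :
  comp (pair f g) h = pair (comp f h) (comp g h).
Proof.
  rewrite (pair_uniq (comp (pair f g) h)), !comp_assoc, p1_pair, p2_pair.
  reflexivity.
Qed.

Lemma pair_p1_p2 (A B : C) : pair (@p1 C A B) p2 = idm (prod A B).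
Proof.
  rewrite (pair_uniq (idm (prod A B))), !comp_idr. reflexivity.
Qed.

Definition swap (A B : C) : Hom (prod A B) (prod B A) := pair p2 p1.

Lemma swap_invol (A B : C) : comp (swap B A) (swap A B) = idm (prod A B).
Proof. unfold swap. rewrite pair_comp, p1_pair, p2_pair. apply pair_p1_p2. Qed.

Lemma hom_to_stable_initial (W Z : C) : stable_initial Z -> Hom W Z ->
  (forall T : C, inhabited (Hom W T)) /\ (forall T (f g : Hom W T), f = g).
Proof.
  intros [Zinit Ziso] w.
  destruct (Ziso W) as (phi & psi & Hpsiphi & _).
  split.
  - intro T. destruct (Zinit T) as [z _].
    exact (inhabits (comp (comp z phi) (pair (idm W) w))).
  - intros T f g. destruct (Zinit T) as [z Hz].
    assert (Hk : forall k : Hom W T, comp k p1 = comp z phi).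
    { intro k. rewrite <- (Hz (comp (comp k p1) psi)), <- comp_assoc, Hpsiphi, comp_idr.
      reflexivity. }
    rewrite <- (comp_idr f), <- (comp_idr g), <- (p1_pair (idm W) w), !comp_assoc, !Hk.
    reflexivity.
Qed.

End Products.

Section Fibres.
Context {C : Cat} {D : Doctrine C}.

Lemma le_ext A (x y : P D A) : (forall c, le c x <-> le c y) -> x = y.
Proof. intro Hxy. apply le_antisym; apply Hxy; apply le_refl. Qed.

Lemma re_section X Y (s : Hom X Y) (r : Hom Y X) :
  comp r s = idm X -> forall z : P D X, re s (re r z) = z.
Proof. intros Hrs z. rewrite <- re_comp, Hrs, re_id. reflexivity. Qed.

Lemma meet_le_l A (a b m : P D A) : is_meet a b m -> le m a.
Proof. intros (Ha & _). exact Ha. Qed.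

Lemma meet_le_r A (a b m : P D A) : is_meet a b m -> le m b.
Proof. intros (_ & Hb & _). exact Hb. Qed.

Lemma meet_glb A (a b m c : P D A) : is_meet a b m -> le c a -> le c b -> le c m.
Proof. intros (_ & _ & Hglb). exact (Hglb c). Qed.

Lemma meet_unique A (a b m m' : P D A) : is_meet a b m -> is_meet a b m' -> m = m'.
Proof.
  intros Hm Hm'. apply le_antisym.
  - exact (meet_glb Hm' (meet_le_l Hm) (meet_le_r Hm)).
  - exact (meet_glb Hm (meet_le_l Hm') (meet_le_r Hm')).
Qed.

Lemma meet_top_l A (t a : P D A) : is_top t -> is_meet t a a.
Proof. intro Ht. repeat split; [apply Ht | apply le_refl | tauto]. Qed.

Lemma join_unique A (a b j j' : P D A) : is_join a b j -> is_join a b j' -> j = j'.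
Proof. intros (Ha & Hb & Hj) (Ha' & Hb' & Hj'). apply le_antisym; auto. Qed.

Lemma imp_unique A (a b i i' : P D A) : is_imp a b i -> is_imp a b i' -> i = i'.
Proof. intros Hi Hi'. apply le_ext. intro c. rewrite (Hi c), (Hi' c). tauto. Qed.

Lemma is_imp_le_iff A (a b i c m : P D A) :
  is_imp a b i -> is_meet c a m -> (le c i <-> le m b).
Proof.
  intros Hi Hm. rewrite (Hi c). split.
  - intro Hc. exact (Hc m Hm).
  - intros Hmb m' Hm'. rewrite (meet_unique Hm' Hm). exact Hmb.
Qed.

Lemma right_adjoint_imp X Y (f : Hom X Y) (Pi : P D X -> P D Y)
    (adj : forall b phi, le (re f b) phi <-> le b (Pi phi))
    (meet_ex : forall c a : P D Y, exists m, is_meet c a m)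
    (re_meet : forall a b m : P D Y, is_meet a b m -> is_meet (re f a) (re f b) (re f m))
    (a : P D Y) (b ix : P D X) (iy : P D Y) :
  is_imp (re f a) b ix -> is_imp a (Pi b) iy -> Pi ix = iy.
Proof.
  intros Hix Hiy. apply le_ext. intro c. destruct (meet_ex c a) as [m Hm].
  rewrite <- adj, (is_imp_le_iff Hix (re_meet _ _ _ Hm)), adj, (is_imp_le_iff Hiy Hm).
  tauto.
Qed.

End Fibres.

Section HeytingFibre.
Context {C : Cat} {D : Doctrine C} (A : C) (imp : P D A -> P D A -> P D A).
Hypothesis imp_spec : forall a b, is_imp a b (imp a b).
Hypothesis meet_ex : forall a b : P D A, exists m, is_meet a b m.

Lemma heyting_intro c a b m : is_meet c a m -> le m b -> le c (imp a b).
Proof. intro Hm. exact (proj2 (is_imp_le_iff (imp_spec a b) Hm)). Qed.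

Lemma heyting_mp g a b : le g (imp a b) -> le g a -> le g b.
Proof.
  intros Hgi Hga. destruct (meet_ex (imp a b) a) as [m Hm].
  apply le_trans with m; [exact (meet_glb Hm Hgi Hga) |].
  exact (proj1 (is_imp_le_iff (imp_spec a b) Hm) (le_refl _)).
Qed.

Lemma heyting_K a b : le a (imp b a).
Proof. destruct (meet_ex a b) as [m Hm]. exact (heyting_intro Hm (meet_le_l Hm)). Qed.

Lemma heyting_S g a b : le (imp g (imp a b)) (imp (imp g a) (imp g b)).
Proof.
  destruct (meet_ex (imp g (imp a b)) (imp g a)) as [m Hm].
  destruct (meet_ex m g) as [w Hw].
  apply (heyting_intro Hm), (heyting_intro Hw), heyting_mp with a.
  - apply heyting_mp with g; [| exact (meet_le_r Hw)].
    exact (le_trans (meet_le_l Hw) (meet_le_l Hm)).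
  - apply heyting_mp with g; [| exact (meet_le_r Hw)].
    exact (le_trans (meet_le_l Hw) (meet_le_r Hm)).
Qed.

Lemma heyting_of_le g a b : le a b -> le g (imp a b).
Proof.
  intro Hab. destruct (meet_ex g a) as [m Hm].
  exact (heyting_intro Hm (le_trans (meet_le_r Hm) Hab)).
Qed.

End HeytingFibre.

Lemma tripos_implicational {C : Cat} (D : Doctrine C) : tripos D -> implicational D.
Proof.
  intros [[Hfib Hre] [[Sg1 [Pi1 [Sg2 [Pi2 [_ [HPi2 _]]]]]] _]].
  assert (meet_ex : forall A (a b : P D A), exists m, is_meet a b m)
    by (intro A; apply (Hfib A)).
  assert (imp_ex : forall A (a b : P D A), exists i, is_imp a b i)
    by (intro A; apply (Hfib A)).
  assert (re_meet : forall X A (f : Hom X A) (a b m : P D A),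
             is_meet a b m -> is_meet (re f a) (re f b) (re f m))
    by (intros X A f; destruct (Hre X A f) as (_ & _ & Hre_meet & _); exact Hre_meet).
  assert (re_imp : forall X A (f : Hom X A) (a b i : P D A),
             is_imp a b i -> is_imp (re f a) (re f b) (re f i))
    by (intros X A f; destruct (Hre X A f) as (_ & _ & _ & _ & Hre_imp); exact Hre_imp).
  pose (imp := fun A (a b : P D A) =>
                 proj1_sig (constructive_indefinite_description _ (imp_ex A a b))).
  assert (imp_spec : forall A (a b : P D A), is_imp a b (imp A a b))
    by (intros; exact (proj2_sig _)).
  clearbody imp.
  exists imp. split; [| split; [| split; [| split; [| split]]]].
  - intros X A f a b. apply (imp_unique (a := re f a) (b := re f b)); [| apply imp_spec].
    apply re_imp, imp_spec.
  - intros X A. exists (Pi2 X A). split.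
    + intros a phi. symmetry. apply HPi2.
    + intros a b. eapply (right_adjoint_imp (f := p2)); try apply imp_spec.
      * intros. symmetry. apply HPi2.
      * apply meet_ex.
      * apply re_meet.
  - intro A. apply heyting_K; [apply imp_spec | apply meet_ex].
  - intro A. apply heyting_S; [apply imp_spec | apply meet_ex].
  - intro A. apply heyting_mp; [apply imp_spec | apply meet_ex].
  - intro A. apply heyting_of_le; [apply imp_spec | apply meet_ex].
Qed.

Section ImplicationalHeaco.
Context {C : Cat} {D : Doctrine C} (H : Heaco D)
  (imp : forall {A : C}, P D A -> P D A -> P D A).
Hypothesis re_imp :
  forall X A (f : Hom X A) (a b : P D A), re f (imp a b) = imp (re f a) (re f b).
Hypothesis p2_right_adjoint : forall X A : C, exists Pi : P D (prod X A) -> P D A,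
  forall (a : P D A) (phi : P D (prod X A)), le (re p2 a) phi <-> le a (Pi phi).
Hypothesis imp_K : forall A (a b : P D A), le a (imp b a).
Hypothesis imp_mp : forall A (g a b : P D A), le g (imp a b) -> le g a -> le g b.
Hypothesis imp_of_le : forall A (g a b : P D A), le a b -> le g (imp a b).

Lemma meet_ex A (a b : P D A) : exists m, is_meet a b m.
Proof. exact (proj1 (proj1 (h_elem H)) A a b). Qed.

Lemma re_meet X A (f : Hom X A) (a b m : P D A) :
  is_meet a b m -> is_meet (re f a) (re f b) (re f m).
Proof. exact (proj2 (proj1 (h_elem H)) X A f a b m). Qed.

Lemma le_of_coc_bot A (a b : P D A) : is_bot (re (h_coc H b) a) -> le a b.
Proof.
  intro Hbot. destruct (h_coc_univ H Hbot) as [g [Hg _]].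
  apply (h_coc_full (h := H)). exists g. exact Hg.
Qed.

Lemma top_of_imp_bot A (a e : P D A) : is_bot e -> is_bot (imp a e) -> is_top a.
Proof.
  (* Over the co-comprehension of [a], [a] is bottom, hence [imp a e] is top and the
     fibre collapses. *)
  intros He Hae t. apply le_of_coc_bot.
  assert (Hka : is_bot (re (h_coc H a) a)) by apply h_coc_bot.
  intro c. apply le_trans with (imp (re (h_coc H a) a) (re (h_coc H a) e)).
  - apply imp_of_le, Hka.
  - rewrite <- re_imp. apply le_trans with (re (h_coc H a) e); [apply re_mono, Hae |].
    apply le_trans with (re (h_coc H a) a); [apply re_mono, He | apply Hka].
Qed.

Lemma imp_intro A (c a b m : P D A) : is_meet c a m -> le m b -> le c (imp a b).
Proof.
  (* Over the co-comprehension of [imp a b], [b] is bottom and [a] is top, so [c] lies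
     below [m <= b]. *)
  intros Hm Hmb. apply le_of_coc_bot.
  set (k := h_coc H (imp a b)).
  assert (Hk : is_bot (imp (re k a) (re k b))) by (rewrite <- re_imp; apply h_coc_bot).
  assert (Hkb : is_bot (re k b)).
  { intro x. apply le_trans with (imp (re k a) (re k b)); [apply imp_K | apply Hk]. }
  assert (Hka : is_top (re k a)) by exact (top_of_imp_bot Hkb Hk).
  intro x. apply le_trans with (re k b); [| apply Hkb].
  apply le_trans with (re k m); [| apply re_mono, Hmb].
  apply (meet_glb (re_meet k Hm)); [apply le_refl | apply Hka].
Qed.

Lemma imp_heyting A (a b : P D A) : is_imp a b (imp a b).
Proof.
  intro c. split.
  - intros Hc m Hm. apply imp_mp with a; [| exact (meet_le_r Hm)].
    exact (le_trans (meet_le_l Hm) Hc).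
  - intro Hmb. destruct (meet_ex c a) as [m Hm]. exact (imp_intro Hm (Hmb m Hm)).
Qed.

Lemma re_top X A (f : Hom X A) (t : P D A) : is_top t -> is_top (re f t).
Proof.
  intros Ht c. apply le_trans with (re f (imp t t)).
  - rewrite re_imp. apply imp_of_le, le_refl.
  - apply re_mono, Ht.
Qed.

Definition preserves_bot X A (f : Hom X A) : Prop :=
  forall e : P D A, is_bot e -> is_bot (re f e).

Lemma preserves_bot_section X A (s : Hom X A) (r : Hom A X) :
  comp r s = idm X -> preserves_bot s.
Proof. intros Hrs e He z. rewrite <- (re_section Hrs z). apply re_mono, He. Qed.

Lemma preserves_bot_comp X Y A (f : Hom X Y) (g : Hom Y A) :
  preserves_bot f -> preserves_bot g -> preserves_bot (comp g f).
Proof. intros Hf Hg e He. rewrite re_comp. apply Hf, Hg, He. Qed.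

Lemma preserves_bot_p2 X A : preserves_bot (@p2 C X A).
Proof.
  destruct (p2_right_adjoint X A) as [Pi HPi]. intros e He phi. apply HPi, He.
Qed.

Lemma preserves_bot_p1 A X : preserves_bot (@p1 C A X).
Proof.
  replace (@p1 C A X) with (comp p2 (swap A X)) by (unfold swap; apply p2_pair).
  apply preserves_bot_comp; [| apply preserves_bot_p2].
  apply preserves_bot_section with (swap X A). apply swap_invol.
Qed.

Lemma re_bot X A (f : Hom X A) (e : P D A) : is_bot e -> is_bot (re f e).
Proof.
  revert e. replace f with (comp p1 (pair f (idm X))) by apply p1_pair.
  apply preserves_bot_comp; [| apply preserves_bot_p1].
  apply preserves_bot_section with p2. apply p2_pair.
Qed.

Definition bot (A : C) : P D A :=
  proj1_sig (constructive_indefinite_description _ (h_bot H A)).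

Lemma bot_is_bot A : is_bot (bot A).
Proof. exact (proj2_sig _). Qed.

Lemma bot_unique A (e : P D A) : is_bot e -> e = bot A.
Proof. intro He. apply le_antisym; [apply He | apply bot_is_bot]. Qed.

Definition neg A (a : P D A) : P D A := imp a (bot A).

Lemma re_neg X A (f : Hom X A) (a : P D A) : re f (neg a) = neg (re f a).
Proof. unfold neg. rewrite re_imp, (bot_unique (re_bot f (bot_is_bot (A := A)))). reflexivity. Qed.

Lemma neg_anti A (x y : P D A) : le x y -> le (neg y) (neg x).
Proof.
  intro Hxy. destruct (meet_ex (neg y) x) as [m Hm]. apply (imp_intro Hm).
  apply imp_mp with y; [exact (meet_le_l Hm) | exact (le_trans (meet_le_r Hm) Hxy)].
Qed.

Lemma neg_neg A (a : P D A) : neg (neg a) = a.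
Proof.
  apply le_antisym.
  - apply le_of_coc_bot.
    rewrite !re_neg, (bot_unique (h_coc_bot (h := H) (a := a))).
    intro x. apply le_trans with (bot (h_coc_ob H a)); [| apply bot_is_bot].
    apply imp_mp with (neg (bot _)); [apply le_refl | apply imp_of_le, le_refl].
  - destruct (meet_ex a (neg a)) as [m Hm]. apply (imp_intro Hm).
    apply imp_mp with a; [exact (meet_le_r Hm) | exact (meet_le_l Hm)].
Qed.

Lemma neg_le_neg A (x y : P D A) : le (neg x) (neg y) <-> le y x.
Proof.
  split; [| apply neg_anti].
  intro Hxy. rewrite <- (neg_neg x), <- (neg_neg y). apply neg_anti, Hxy.
Qed.

Lemma neg_le_comm A (x y : P D A) : le (neg x) y <-> le (neg y) x.
Proof. rewrite <- neg_le_neg, neg_neg. tauto. Qed.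

Lemma le_neg_comm A (x y : P D A) : le x (neg y) <-> le y (neg x).
Proof. rewrite <- neg_le_neg, neg_neg. tauto. Qed.

Lemma join_neg_meet A (a b m : P D A) : is_meet (neg a) (neg b) m -> is_join a b (neg m).
Proof.
  intro Hm. split; [| split].
  - apply le_neg_comm, (meet_le_l Hm).
  - apply le_neg_comm, (meet_le_r Hm).
  - intros c Hac Hbc. apply neg_le_comm, (meet_glb Hm); apply neg_anti; assumption.
Qed.

Lemma re_join X A (f : Hom X A) (a b j : P D A) :
  is_join a b j -> is_join (re f a) (re f b) (re f j).
Proof.
  intro Hj. destruct (meet_ex (neg a) (neg b)) as [m Hm].
  rewrite (join_unique Hj (join_neg_meet Hm)), re_neg.
  apply join_neg_meet. rewrite <- !re_neg. apply re_meet, Hm.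
Qed.

Lemma neg_Pi_neg_adj X Y (f : Hom X Y) (Pi : P D X -> P D Y)
    (adj : forall b g, le b (Pi g) <-> le (re f b) g) (g : P D X) (b : P D Y) :
  le (neg (Pi (neg g))) b <-> le g (re f b).
Proof. rewrite neg_le_comm, adj, re_neg, neg_le_neg. tauto. Qed.

Definition Pi2 : forall A G : C, P D (prod A G) -> P D G :=
  fun A G => proj1_sig (constructive_indefinite_description _ (p2_right_adjoint A G)).
Arguments Pi2 : clear implicits.

Definition Sg2 : forall A G : C, P D (prod A G) -> P D G :=
  fun A G g => neg (Pi2 A G (neg g)).
Arguments Sg2 : clear implicits.

Definition Pi1 : forall G A : C, P D (prod G A) -> P D G :=
  fun G A g => Pi2 A G (re (swap A G) g).
Arguments Pi1 : clear implicits.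

Definition Sg1 : forall G A : C, P D (prod G A) -> P D G :=
  fun G A g => neg (Pi1 G A (neg g)).
Arguments Sg1 : clear implicits.

Lemma Pi2_adj A G (g : P D (prod A G)) (b : P D G) : le b (Pi2 A G g) <-> le (re p2 b) g.
Proof.
  unfold Pi2. destruct (constructive_indefinite_description _ _) as [Pi HPi]. simpl.
  symmetry. apply HPi.
Qed.

Lemma Sg2_adj A G (g : P D (prod A G)) (b : P D G) : le (Sg2 A G g) b <-> le g (re p2 b).
Proof. apply neg_Pi_neg_adj. intros; apply Pi2_adj. Qed.

Lemma Pi1_adj G A (g : P D (prod G A)) (b : P D G) : le b (Pi1 G A g) <-> le (re p1 b) g.
Proof.
  unfold Pi1. rewrite Pi2_adj. split; intro Hb.
  - apply (re_mono (swap G A)) in Hb.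
    rewrite <- !re_comp, swap_invol, re_id in Hb. unfold swap in Hb.
    rewrite p2_pair in Hb. exact Hb.
  - apply (re_mono (swap A G)) in Hb.
    rewrite <- re_comp in Hb. unfold swap in Hb. rewrite p1_pair in Hb. exact Hb.
Qed.

Lemma Sg1_adj G A (g : P D (prod G A)) (b : P D G) : le (Sg1 G A g) b <-> le g (re p1 b).
Proof. apply neg_Pi_neg_adj. intros; apply Pi1_adj. Qed.

Lemma Sg2_choice A G (g : P D (prod A G)) (HA : ~ stable_initial A) :
  Sg2 A G g = re (pair (h_eps2 H g HA) (idm G)) g.
Proof.
  apply le_antisym.
  - apply Sg2_adj, (h_eps2_spec H g HA), le_refl.
  - apply (h_eps2_spec H g HA), Sg2_adj, le_refl.
Qed.

Lemma le_over_stable_initial Y A (y : Hom Y A) (x z : P D Y) : stable_initial A -> le x z.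
Proof.
  intro HA. apply (h_coc_full (h := H)).
  destruct (hom_to_stable_initial HA (comp y (h_coc H z))) as [Hex Huniq].
  destruct (Hex (h_coc_ob H x)) as [g]. exists g. apply Huniq.
Qed.

Lemma Sg2_BC A G Dl (h : Hom Dl G) (g : P D (prod A G)) :
  re h (Sg2 A G g) = Sg2 A Dl (re (pair p1 (comp h p2)) g).
Proof.
  set (k := pair (@p1 C A Dl) (comp h p2)).
  apply le_antisym.
  - destruct (classic (stable_initial A)) as [HA | HA].
    + apply le_trans with (re h (bot G)).
      * apply re_mono, Sg2_adj, (le_over_stable_initial p1 _ _ HA).
      * apply re_bot, bot_is_bot.
    + rewrite (Sg2_choice g HA), <- re_comp.
      replace (comp (pair (h_eps2 H g HA) (idm G)) h)
        with (comp k (pair (comp (h_eps2 H g HA) h) (idm Dl))).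
      * rewrite re_comp.
        rewrite <- (re_section (p2_pair (comp (h_eps2 H g HA) h) (idm Dl))
                                (Sg2 A Dl (re k g))).
        apply re_mono, Sg2_adj, le_refl.
      * unfold k. rewrite !pair_comp, <- comp_assoc, p1_pair, p2_pair, comp_idl, comp_idr.
        reflexivity.
  - apply Sg2_adj. rewrite <- re_comp.
    replace (comp h p2) with (comp p2 k) by apply p2_pair.
    rewrite re_comp. apply re_mono, Sg2_adj, le_refl.
Qed.

Lemma Pi2_BC A G Dl (h : Hom Dl G) (g : P D (prod A G)) :
  re h (Pi2 A G g) = Pi2 A Dl (re (pair p1 (comp h p2)) g).
Proof.
  assert (Pi2_Sg2 : forall G' (g' : P D (prod A G')), Pi2 A G' g' = neg (Sg2 A G' (neg g')))
    by (intros; unfold Sg2; rewrite !neg_neg; reflexivity).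
  rewrite !Pi2_Sg2, re_neg, Sg2_BC, re_neg. reflexivity.
Qed.

Lemma Pi1_BC G Dl A (h : Hom Dl G) (g : P D (prod G A)) :
  re h (Pi1 G A g) = Pi1 Dl A (re (pair (comp h p1) p2) g).
Proof.
  unfold Pi1. rewrite Pi2_BC, <- !re_comp. f_equal. f_equal.
  unfold swap. rewrite !pair_comp, p1_pair, p2_pair, <- !comp_assoc, p1_pair, p2_pair.
  reflexivity.
Qed.

Lemma Sg1_BC G Dl A (h : Hom Dl G) (g : P D (prod G A)) :
  re h (Sg1 G A g) = Sg1 Dl A (re (pair (comp h p1) p2) g).
Proof. unfold Sg1. rewrite re_neg, Pi1_BC, re_neg. reflexivity. Qed.

Lemma delta_equality (X : C) (a : P D (prod X X)) (t : P D X) : is_top t ->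
  (le t (re (pair (idm X) (idm X)) a) <-> le (h_delta H X) a).
Proof.
  intro Ht. destruct (h_elem H) as [_ Hel].
  pose proof (Hel X X (re p1 t) (re (pair (comp p2 p1) p2) a)
                  (re (pair (comp p2 p1) p2) (h_delta H X))) as Hadj.
  specialize (Hadj (meet_top_l _ (re_top _ (re_top _ Ht)))).
  assert (Hdiag : re (pair (idm (prod X X)) p2) (re (pair (comp p2 p1) p2) a)
                  = re p2 (re (pair (idm X) (idm X)) a)).
  { rewrite <- !re_comp. f_equal.
    rewrite !pair_comp, <- comp_assoc, p1_pair, p2_pair, comp_idr, !comp_idl.
    reflexivity. }
  rewrite Hdiag in Hadj.
  assert (Hsec : comp (pair (comp p2 p1) p2) (pair (pair (@p1 C X X) p1) p2)
                 = idm (prod X X)).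
  { rewrite pair_comp, <- comp_assoc, !p1_pair, !p2_pair. apply pair_p1_p2. }
  split; intro Hle.
  - assert (Hw : le (re (pair (comp p2 (@p1 C (prod X X) X)) p2) (h_delta H X))
                    (re (pair (comp p2 p1) p2) a)).
    { apply Hadj, re_top. intro c. exact (le_trans (Ht c) Hle). }
    apply (re_mono (pair (pair p1 p1) p2)) in Hw.
    rewrite !(re_section Hsec) in Hw. exact Hw.
  - assert (Hp : le (re p1 t) (re p2 (re (pair (idm X) (idm X)) a)))
      by (apply Hadj, re_mono, Hle).
    apply (re_mono (pair (idm X) (idm X))) in Hp.
    rewrite (re_section (p1_pair _ _)), (re_section (p2_pair _ _)) in Hp. exact Hp.
Qed.

Lemma implicational_tripos : tripos D.
Proof.
  split; [split | split; [| split]].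
  - intro A. split; [exists (imp (bot A) (bot A)); intro c; apply imp_of_le, le_refl |].
    split; [exists (bot A); apply bot_is_bot |].
    split; [apply meet_ex |]. split.
    + intros a b. destruct (meet_ex (neg a) (neg b)) as [m Hm].
      exists (neg m). apply join_neg_meet, Hm.
    + intros a b. exists (imp a b). apply imp_heyting.
  - intros X A f. split; [intro t; apply re_top |].
    split; [apply re_bot |]. split; [apply re_meet |]. split; [apply re_join |].
    intros a b i Hi. rewrite (imp_unique Hi (imp_heyting a b)), re_imp. apply imp_heyting.
  - exists Sg1, Pi1, Sg2, Pi2. split; [| split; [| split]].
    + intros. split; [apply Sg1_adj | apply Pi1_adj].
    + intros. split; [apply Sg2_adj | apply Pi2_adj].
    + intros. split; [apply Sg1_BC | apply Pi1_BC].
    + intros. split; [apply Sg2_BC | apply Pi2_BC].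
  - intro X. exists (h_delta H X). intros. apply delta_equality. assumption.
  - apply (h_higher H).
Qed.

End ImplicationalHeaco.

Theorem mainTheorem16 (C : Cat) (D : Doctrine C) (H : Heaco D) :
  implicational D <-> tripos D.
Proof.
  split.
  - intros (imp & Hre & Hquant & HK & _ & Hmp & Hle).
    apply (implicational_tripos (imp := imp) H); try assumption.
    intros X A. destruct (Hquant X A) as (Pi & HPi & _). exists Pi. exact HPi.
  - apply tripos_implicational.
Qed.
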